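(* Let $(S,\alpha)$ be a twisted K3 surface, $d=\mathrm{ord}(\alpha)$, $B\in\frac1dH^2(S,\mathbb Z)$ a B-field lift of $\alpha$. Put $\widetilde M=\langle\widetilde{NS}(S,B),(0,0,-\tfrac1d)\rangle$ and $\widetilde T=\langle T(S,B),y\rangle$, where $y\in T(S,B)^\vee$ represents $\lambda([(0,0,-\frac1d)])$. Let $\lambda_0:D_{\widetilde{NS}(S)}\to D_{T(S)}$ be the natural isomorphism and $\bar\lambda:D_{\widetilde M}\to D_{\widetilde T}$ the isomorphism induced by $\lambda$. Then $$\bar\lambda\circ (e^B\circ\kappa)_* = (e^B)_*\circ\lambda_0:\ D_{\widetilde{NS}(S)}\to D_{\widetilde T},$$ where $(e^B\circ\kappa)_*:D_{\widetilde{NS}(S)}\to D_{\widetilde M}$ and $(e^B)_*:D_{T(S)}\to D_{\widetilde T}$ are induced by the isometries $e^B\circ\kappa:\widetilde{NS}(S)\cong\widetilde M$ and $e^B:T(S)\cong\widetilde T$.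
   Context: $S$ is a complex projective K3 surface with $NS(S)$, $T(S)=NS(S)^\perp\subset H^2(S,\mathbb Z)$ and holomorphic 2-form class $\omega_S$. Mukai lattice $\widetilde H(S,\mathbb Z)=H^0\oplus H^2\oplus H^4$, elements $(a,l,b)$, pairing $((a,l,b),(a',l',b'))=(l,l')-ab'-a'b$; $\widetilde{NS}(S)=H^0\oplus NS(S)\oplus H^4$. $e^B(a,l,b)=(a,l+aB,b+(B,l)+\frac a2(B,B))$. A B-field lift of $\alpha\in \mathrm{Br}(S)\cong H^2(S,\mathbb Q)/(NS(S)_{\mathbb Q}+H^2(S,\mathbb Z))$ is a preimage $B$. $\widetilde{NS}(S,B)=e^B(\omega_S)^\perp\cap\widetilde H(S,\mathbb Z)$, $T(S,B)$ its orthogonal complement in $\widetilde H(S,\mathbb Z)$. $\kappa(a,l,b)=(da,l,b/d)$. It is known that $e^B\circ\kappa$ maps $\widetilde{NS}(S)$ isometrically onto $\widetilde M$ and $e^B$ maps $T(S)$ isometrically onto $\widetilde T$. For an even lattice $L$, $D_L=L^\vee/L$. The natural isometry $\lambda:D_{\widetilde{NS}(S,B)}\to D_{T(S,B)}$ sends $[x]$ to $[y']$ where $x+y'\in\widetilde H(S,\mathbb Z)$; likewise $\lambda_0:D_{\widetilde{NS}(S)}\cong D_{NS(S)}\to D_{T(S)}$ sends $[x]$ to $[y']$ with $x+y'\in H^2(S,\mathbb Z)$. Since $\widetilde M/\widetilde{NS}(S,B)$ is generated by the isotropic element $h=[(0,0,-\frac1d)]$, $D_{\widetilde M}=h^\perp/\langle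 h\rangle$ and $D_{\widetilde T}=\lambda(h)^\perp/\langle\lambda(h)\rangle$; $\bar\lambda$ is the isomorphism induced by $\lambda$ on these subquotients. *)

From HB Require Import structures.
From mathcomp Require Import all_boot all_order all_algebra.
Set Implicit Arguments. Unset Strict Implicit. Unset Printing Implicit Defensive.
Import Order.TTheory GRing.Theory Num.Theory.
Local Open Scope ring_scope.

(** * The K3 lattice  U^3 (+) E8(-1)^2  on Z^22 (a marking of H^2(S,Z)). *)
Definition e8m1 (a b : nat) : int :=
  if a == b then -2
  else if ((a.+1 == b) || (b.+1 == a)) && (a <= 6)%N && (b <= 6)%N then 1
  else if ((a == 2%N) && (b == 7%N)) || ((a == 7%N) && (b == 2%N)) then 1
  else 0.

Definition k3form (i j : nat) : int :=
  if (i < 6)%N && (j < 6)%N then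
    (if (i./2 == j./2) && (i != j) then 1 else 0)
  else if (6 <= i < 14)%N && (6 <= j < 14)%N then e8m1 (i - 6) (j - 6)
  else if (14 <= i < 22)%N && (14 <= j < 22)%N then e8m1 (i - 14) (j - 14)
  else 0.

Definition k3mx (R : pzRingType) : 'M[R]_22 :=
  \matrix_(i < 22, j < 22) (k3form i j)%:~R.

Definition bil (R : pzRingType) (u v : 'rV[R]_22) : R :=
  (u *m k3mx R *m v^T) 0 0.

(** Mukai vectors (a, l, b) in H^0 (+) H^2 (+) H^4 with coefficients in R. *)
Definition mvec (R : Type) := (R * 'rV[R]_22 * R)%type.
Definition mk (R : Type) (a : R) (l : 'rV[R]_22) (b : R) : mvec R := (a, l, b).
Definition m0 (R : Type) (v : mvec R) : R := v.1.1.
Definition m2 (R : Type) (v : mvec R) : 'rV[R]_22 := v.1.2.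
Definition m4 (R : Type) (v : mvec R) : R := v.2.

Definition madd (R : pzRingType) (u v : mvec R) : mvec R :=
  mk (m0 u + m0 v) (m2 u + m2 v) (m4 u + m4 v).
Definition mopp (R : pzRingType) (u : mvec R) : mvec R :=
  mk (- m0 u) (- m2 u) (- m4 u).
Definition mscale (R : pzRingType) (k : R) (u : mvec R) : mvec R :=
  mk (k * m0 u) (k *: m2 u) (k * m4 u).

Definition mpair (R : pzRingType) (u v : mvec R) : R :=
  bil (m2 u) (m2 v) - m0 u * m4 v - m0 v * m4 u.

Definition eB (R : fieldType) (B : 'rV[R]_22) (u : mvec R) : mvec R :=
  mk (m0 u) (m2 u + m0 u *: B)
     (m4 u + bil B (m2 u) + m0 u / 2%:R * bil B B).

Definition kappa (R : fieldType) (d : nat) (u : mvec R) : mvec R :=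
  mk (d%:R * m0 u) (m2 u) (m4 u / d%:R).

Definition mmap (R S : pzRingType) (f : R -> S) (u : mvec R) : mvec S :=
  mk (f (m0 u)) (map_mx f (m2 u)) (f (m4 u)).

Definition vint (v : 'rV[rat]_22) : Prop := forall i, v 0 i \is a Num.int.
Definition mint (u : mvec rat) : Prop :=
  m0 u \is a Num.int /\ vint (m2 u) /\ m4 u \is a Num.int.

(** Lattices are given as predicates on rational vectors.
    L_Q = rational span of a lattice L;  L^dual = {x in L_Q | (x, L) in Z}. *)
Definition mspanQ (L : mvec rat -> Prop) (x : mvec rat) : Prop :=
  exists n : nat, (0 < n)%N /\ L (mscale n%:R x).
Definition mdual (L : mvec rat -> Prop) (x : mvec rat) : Prop :=
  mspanQ L x /\ forall v, L v -> mpair x v \is a Num.int.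
Definition morth (L : mvec rat -> Prop) (x : mvec rat) : Prop :=
  mint x /\ forall v, L v -> mpair x v = 0.

Definition NS (C : numClosedFieldType) (w : 'rV[C]_22) (l : 'rV[rat]_22) : Prop :=
  vint l /\ bil (map_mx ratr l) w = 0.
Definition NSQ (C : numClosedFieldType) (w : 'rV[C]_22) (l : 'rV[rat]_22) : Prop :=
  exists n : nat, (0 < n)%N /\ NS w (n%:R *: l).
(* T(S) = NS(S)^perp in H^2(S,Z), viewed inside the Mukai lattice *)
Definition TS (C : numClosedFieldType) (w : 'rV[C]_22) (u : mvec rat) : Prop :=
  m0 u = 0 /\ m4 u = 0 /\ vint (m2 u) /\
  forall l, NS w l -> bil (m2 u) l = 0.
Definition NStil (C : numClosedFieldType) (w : 'rV[C]_22) (u : mvec rat) : Prop :=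
  mint u /\ NS w (m2 u).
(* NS~(S,B) = e^B(omega)^perp cap H~(S,Z) *)
Definition NSB (C : numClosedFieldType) (w : 'rV[C]_22) (B : 'rV[rat]_22)
  (u : mvec rat) : Prop :=
  mint u /\ mpair (mmap ratr u) (eB (map_mx ratr B) (mk 0 w 0)) = 0.
Definition TSB (C : numClosedFieldType) (w : 'rV[C]_22) (B : 'rV[rat]_22) :=
  morth (NSB w B).

(** Brauer class alpha = [B] in H^2(S,Q)/(NS(S)_Q + H^2(S,Z)); ord(alpha) = d. *)
Definition br_trivial (C : numClosedFieldType) (w : 'rV[C]_22) (v : 'rV[rat]_22) : Prop :=
  exists n, NSQ w n /\ vint (v - n).
Definition br_order (C : numClosedFieldType) (w : 'rV[C]_22) (B : 'rV[rat]_22)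
  (d : nat) : Prop :=
  (0 < d)%N /\ br_trivial w (d%:R *: B) /\
  forall k : nat, (0 < k < d)%N -> ~ br_trivial w (k%:R *: B).

Definition K3_period (C : numClosedFieldType) (w : 'rV[C]_22) : Prop :=
  bil w w = 0 /\ 0 < bil w (map_mx Num.conj w) /\
  exists l, NS w l /\ 0 < bil l l.

From HB Require Import structures.
From mathcomp Require Import all_boot all_order all_algebra.
From mathcomp Require Import ring.
Import Order.TTheory GRing.Theory Num.Theory.
Local Open Scope ring_scope.

(** Given representatives [x] of a class in D_{NS~(S)}, [y'] of its image under
    lambda_0, and [z] of the image of [e^B kappa x] under lambda, we must show
    that [v := z - e^B y'] represents the same class as [z] in
    D_{T~} = T~^dual / T~, i.e. [v] lies in T(S,B) + Z y.  Two facts suffice.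
    - Orthogonality: [z] and [y] lie in the span of T(S,B), and [e^B y'] is
      orthogonal to NS~(S,B) because [y'] is orthogonal to NS(S), while
      [u = (a,m,b)] in NS~(S,B) untwists to the class [d (m - a B)] of NS(S).
    - Integrality: writing [v = (e^B kappa x + z) - e^B kappa (x + y')], both
      terms lie in the overlattice H~(S,Z) + Z (0,0,1/d) (the first is even
      integral), and modulo H~(S,Z) every class of that overlattice is an
      integral multiple of [y]. *)

(** The K3 form is symmetric and even: its Gram matrix is [H + H^T] for the
    integral matrix [H] below (upper triangle, half the diagonal). *)
Definition k3half (i j : nat) : int :=
  if (i < j)%N then k3form i j
  else if i == j then (if k3form i i == -2 then -1 else 0) else 0.

Lemma k3form_half (i j : 'I_22) : k3form i j = k3half i j + k3half j i.
Proof.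
have all_entries : all (fun i => all (fun j =>
    k3form i j == k3half i j + k3half j i) (iota 0 22)) (iota 0 22).
  by vm_compute.
have in22 (k : 'I_22) : val k \in iota 0 22 by rewrite mem_iota add0n ltn_ord.
by apply/eqP; move/allP/(_ _ (in22 i))/allP/(_ _ (in22 j)): all_entries.
Qed.

Definition k3halfmx (R : pzRingType) : 'M[R]_22 :=
  \matrix_(i < 22, j < 22) (k3half i j)%:~R.

(* Expanding [k3mx = H + H^T] gives a manifestly symmetric formula for [bil]. *)
Lemma bil_half (R : comPzRingType) (u v : 'rV[R]_22) :
  bil u v = (u *m k3halfmx R *m v^T) 0 0 + (v *m k3halfmx R *m u^T) 0 0.
Proof.
rewrite /bil; have -> : k3mx R = k3halfmx R + (k3halfmx R)^T.
  by apply/matrixP => i j; rewrite !mxE k3form_half rmorphD.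
rewrite mulmxDr mulmxDl mxE; congr (_ + _).
by rewrite -[in LHS](trmxK (_ *m _^T)) mxE !trmx_mul trmxK mulmxA trmxK.
Qed.

Section BilinearForm.
Context {R : comPzRingType}.
Implicit Types (u v w : 'rV[R]_22) (k : R).

Lemma bilC u v : bil u v = bil v u.
Proof. by rewrite !bil_half addrC. Qed.

Lemma bilDl u v w : bil (u + v) w = bil u w + bil v w.
Proof. by rewrite /bil !mulmxDl mxE. Qed.

Lemma bilZl k u w : bil (k *: u) w = k * bil u w.
Proof. by rewrite /bil -!scalemxAl mxE. Qed.

Lemma bilNl u w : bil (- u) w = - bil u w.
Proof. by rewrite -scaleN1r bilZl mulN1r. Qed.

Lemma bilBl u v w : bil (u - v) w = bil u w - bil v w.
Proof. by rewrite bilDl bilNl. Qed.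

Lemma bilDr u v w : bil w (u + v) = bil w u + bil w v.
Proof. by rewrite !(bilC w) bilDl. Qed.

Lemma bilZr k u w : bil w (k *: u) = k * bil w u.
Proof. by rewrite !(bilC w) bilZl. Qed.

End BilinearForm.

Lemma vintD u v : vint u -> vint v -> vint (u + v).
Proof. by move=> hu hv i; rewrite mxE rpredD. Qed.

Lemma vintZ k u : k \is a Num.int -> vint u -> vint (k *: u).
Proof. by move=> hk hu i; rewrite mxE rpredM. Qed.

Lemma vintB u v : vint u -> vint v -> vint (u - v).
Proof.
by move=> hu hv; rewrite -scaleN1r; apply: vintD => //; apply: vintZ; rewrite ?rpredN1.
Qed.

Lemma half_bil_int u v : vint u -> vint v ->
  (u *m k3halfmx rat *m v^T) 0 0 \is a Num.int.
Proof.
move=> hu hv; rewrite !mxE; apply: rpred_sum => j _; rewrite !mxE.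
apply: rpredM => //; apply: rpred_sum => i _; rewrite !mxE.
by apply: rpredM => //; apply: intr_int.
Qed.

Lemma bil_int u v : vint u -> vint v -> bil u v \is a Num.int.
Proof. by move=> hu hv; rewrite bil_half rpredD // half_bil_int. Qed.

Lemma bil_even u : vint u -> bil u u / 2%:R \is a Num.int.
Proof.
move=> hu; rewrite bil_half -mulr2n -[_ *+ 2]mulr_natr mulfK ?pnatr_eq0 //.
exact: half_bil_int.
Qed.

(** Mukai vectors form a Z-module (the product of the three components);
    [madd] and [mopp] are its operations. *)
Lemma maddE (R : pzRingType) (u v : mvec R) : madd u v = u + v.
Proof. by []. Qed.

Lemma moppE (R : pzRingType) (u : mvec R) : mopp u = - u.
Proof. by []. Qed.

Section MukaiPairing.
Context {R : comPzRingType}.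
Implicit Types (u v w : mvec R) (k : R).

Lemma mpairC u v : mpair u v = mpair v u.
Proof. by rewrite /mpair bilC; ring. Qed.

Lemma mpairDl u v w : mpair (u + v) w = mpair u w + mpair v w.
Proof. by rewrite /mpair bilDl /=; ring. Qed.

Lemma mpairNl u w : mpair (- u) w = - mpair u w.
Proof. by rewrite /mpair bilNl /=; ring. Qed.

Lemma mpairZl k u w : mpair (mscale k u) w = k * mpair u w.
Proof. by rewrite /mpair /mscale /mk /m0 /m2 /m4 /= bilZl; ring. Qed.

End MukaiPairing.

Section Twist.
Context {R : fieldType}.
Implicit Types (u v : mvec R) (B l : 'rV[R]_22).

Lemma eBD B u v : eB B (u + v) = eB B u + eB B v.
Proof.
rewrite /eB /mk /m0 /m2 /m4 /=; congr (_, _, _).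
  by rewrite scalerDl addrACA.
by rewrite /= bilDr; ring.
Qed.

Lemma kappaD d u v : kappa d (u + v) = kappa d u + kappa d v.
Proof. by rewrite /kappa /mk /m0 /m2 /m4 /=; congr (_, _, _); rewrite /=; ring. Qed.

Lemma kappa_H2 d l : kappa d (mk 0 l 0) = mk 0 l 0.
Proof. by rewrite /kappa /mk /m0 /m4 /= mulr0 mul0r. Qed.

Lemma mpair_eB_H2 B l u : mpair u (eB B (mk 0 l 0)) = bil (m2 u - m0 u *: B) l.
Proof.
rewrite /mpair /eB /mk /m0 /m2 /m4 /= bilBl bilZl (bilC B).
by rewrite scale0r !addr0 add0r mul0r mul0r; ring.
Qed.

End Twist.

Lemma mspanQ_morth_orth {L : mvec rat -> Prop} {x u} :
  mspanQ (morth L) x -> L u -> mpair x u = 0.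
Proof.
move=> [n [n_gt0 [_ orth_nx]]] Lu; have := orth_nx u Lu.
by rewrite mpairZl => /eqP; rewrite mulf_eq0 pnatr_eq0 eqn0Ngt n_gt0 => /eqP.
Qed.

Lemma mspanQ_TS {C : numClosedFieldType} {w : 'rV[C]_22} {y} :
  mspanQ (TS w) y ->
  [/\ m0 y = 0, m4 y = 0 & forall l, NS w l -> bil (m2 y) l = 0].
Proof.
move=> [n [n_gt0 [ny0 [ny4 [_ orth_ny]]]]].
have n_neq0 : (n%:R : rat) != 0 by rewrite pnatr_eq0 -lt0n.
move: ny0 ny4; rewrite /mscale /mk /m0 /m4 /= => /eqP + /eqP.
rewrite !mulf_eq0 (negbTE n_neq0) /= => /eqP y0 /eqP y4; split=> // l NSl.
by apply/eqP; move/eqP: (orth_ny l NSl); rewrite bilZl mulf_eq0 (negbTE n_neq0).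
Qed.

Lemma NSB_untwist {C : numClosedFieldType} {w : 'rV[C]_22} {B d u} :
  vint (d%:R *: B) -> NSB w B u -> NS w (d%:R *: (m2 u - m0 u *: B)).
Proof.
move=> dB_int [[u0_int [u2_int _]] orth_u]; split.
  rewrite scalerBr scalerA mulrC -scalerA.
  by apply: vintB; apply: vintZ => //; apply: natr_int.
move: orth_u; rewrite mpair_eB_H2 /mmap /mk /m0 /m2 /= => orth_u.
by rewrite map_mxZ map_mxB map_mxZ bilZl orth_u mulr0.
Qed.

Lemma eB_H2_orth_NSB {C : numClosedFieldType} {w : 'rV[C]_22} {B d l u} :
  (0 < d)%N -> vint (d%:R *: B) -> (forall n, NS w n -> bil l n = 0) ->
  NSB w B u -> mpair (eB B (mk 0 l 0)) u = 0.
Proof.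
move=> d_gt0 dB_int orth_l NSBu.
rewrite mpairC mpair_eB_H2 bilC.
move: (orth_l _ (NSB_untwist dB_int NSBu)); rewrite bilZr => /eqP.
by rewrite mulf_eq0 pnatr_eq0 eqn0Ngt d_gt0 => /eqP.
Qed.

(** The overlattice H~(S,Z) + Z (0,0,1/d): integral in degrees 0 and 2,
    and in [1/d Z] in degree 4. *)
Definition dint (d : nat) (u : mvec rat) : Prop :=
  [/\ m0 u \is a Num.int, vint (m2 u) & d%:R * m4 u \is a Num.int].

Lemma mint_dint d u : mint u -> dint d u.
Proof. by move=> [u0 [u2 u4]]; split=> //; rewrite rpredM ?natr_int. Qed.

Lemma dintB d u v : dint d u -> dint d v -> dint d (u - v).
Proof.
move=> [u0 u2 u4] [v0 v2 v4]; split; rewrite /m0 /m2 /m4 /=.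
- exact: rpredB.
- exact: vintB.
- by rewrite mulrBr rpredB.
Qed.

(* For [d B] integral, [e^B o kappa] maps H~(S,Z) into the overlattice:
   the H^4 component of [e^B (kappa (a,l,b))] is
   [(b + (dB, l) + a (dB,dB)/2) / d]. *)
Lemma dint_eB_kappa d B x :
  (0 < d)%N -> vint (d%:R *: B) -> mint x -> dint d (eB B (kappa d x)).
Proof.
move=> d_gt0 dB_int [x0 [x2 x4]].
have d_neq0 : (d%:R : rat) != 0 by rewrite pnatr_eq0 -lt0n.
rewrite /dint /eB /kappa /mk /m0 /m2 /m4 /=; split.
- by rewrite rpredM ?natr_int.
- by rewrite mulrC -scalerA; apply: vintD => //; apply: vintZ.
- have -> : d%:R * (x.2 / d%:R + bil B x.1.2 + d%:R * x.1.1 / 2%:R * bil B B) =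
      x.2 + bil (d%:R *: B) x.1.2 + x.1.1 * (bil (d%:R *: B) (d%:R *: B) / 2%:R).
    by rewrite !(bilZl, bilZr); field.
  apply: rpredD; first by apply: rpredD; [exact: x4 | exact: bil_int].
  by apply: rpredM; [exact: x0 | exact: bil_even].
Qed.

Lemma dint_reduce d v y (k : int) :
  (0 < d)%N -> dint d v -> mint (mk 0 0 (- d%:R^-1) + y) ->
  d%:R * m4 v = k%:~R -> mint (v - mscale k%:~R y).
Proof.
move=> d_gt0 [v0 v2 _] [y0 [y2 y4]] kE.
have d_neq0 : (d%:R : rat) != 0 by rewrite pnatr_eq0 -lt0n.
move: y0 y2 y4; rewrite /mscale /mk /m0 /m2 /m4 /= !add0r => y0 y2 y4.
split; [|split] => /=.
- by rewrite rpredB // rpredM ?intr_int.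
- by apply: vintB => //; apply: vintZ; rewrite ?intr_int.
- have -> : v.2 - k%:~R * y.2 = - (k%:~R * (- d%:R^-1 + y.2)).
    by rewrite -[v.2](mulKf d_neq0) [_ * v.2]kE; field.
  by rewrite rpredN rpredM ?intr_int.
Qed.

Theorem proposition2p5 (C : numClosedFieldType) (w : 'rV[C]_22)
  (B : 'rV[rat]_22) (d : nat) (y : mvec rat) :
  K3_period w ->
  br_order w B d ->
  vint (d%:R *: B) ->
  mdual (TSB w B) y ->
  mint (madd (mk 0 0 (- (d%:R)^-1)) y) ->
  forall x y' z : mvec rat,
    mdual (NStil w) x ->
    mdual (TS w) y' ->
    mint (madd x y') ->
    mdual (TSB w B) z ->
    mint (madd (eB B (kappa d x)) z) ->
    exists (t : mvec rat) (k : int),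
      TSB w B t /\
      madd z (mopp (eB B y')) = madd t (mscale k%:~R y).
Proof.
move=> _ [d_gt0 _] dB_int [y_span _] y_class x y' z _ [y'_span _] xy'_int.
move=> [z_span _] xz_int.
have [y'0 y'4 y'_orth] := mspanQ_TS y'_span.
have y'E : y' = mk 0 (m2 y') 0.
  by case: y' y'0 y'4 {y'_span y'_orth xy'_int} => [[a l] b]; rewrite /m0 /m4 => /= -> ->.
set v := z - eB B y'.
have vE : v = (eB B (kappa d x) + z) - eB B (kappa d (x + y')).
  by rewrite /v kappaD eBD y'E kappa_H2 opprD addrACA subrr add0r.
have v_dint : dint d v.
  rewrite vE; apply: dintB; first exact: mint_dint.
  exact: dint_eB_kappa.
have [k kE] : exists k : int, d%:R * m4 v = k%:~R by apply/intrP; case: v_dint.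
exists (v - mscale k%:~R y), k; split; last by rewrite !maddE moppE subrK.
split; first exact: dint_reduce d_gt0 v_dint y_class kE.
move=> u NSBu; rewrite mpairDl mpairNl mpairZl /v mpairDl mpairNl y'E.
rewrite (mspanQ_morth_orth z_span NSBu) (mspanQ_morth_orth y_span NSBu).
by rewrite (eB_H2_orth_NSB d_gt0 dB_int y'_orth NSBu) oppr0 mulr0 !addr0.
Qed.
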